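(* Let $\varphi$ be an endomorphism of a torsion-free abelian group $A$. (R) $\varphi$ is inertial if and only if $\varphi$ is multiplication by $\frac mn$ for coprime integers $m,n$ such that, if $n\ne\pm1$, then $r_0(A)<\infty$. (L) $\varphi$ is left-inertial if and only if $\varphi$ is multiplication by $\frac mn$ for coprime integers $m,n$ with $m\neq0$ such that, if $m\ne\pm1$, then $r_0(A)<\infty$.
   Context: Abelian groups are written additively. An endomorphism $\varphi$ of $A$ is inertial if $(\varphi(X)+X)/X$ is finite for every subgroup $X\le A$, and left-inertial if $X/(X\cap\varphi(X))$ is finite for every $X\le A$. For a torsion-free group, $\varphi$ is multiplication by $\frac mn$ ($n\neq0$) means $n\varphi(x)=mx$ for all $x\in A$ (equivalently $\varphi(nx)=mx$). $r_0(A)$ denotes the torsion-free rank of $A$. *)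

From HB Require Import structures.
From mathcomp Require Import all_boot all_order all_algebra.
Set Implicit Arguments. Unset Strict Implicit. Unset Printing Implicit Defensive.
Import Order.TTheory GRing.Theory Num.Theory.
Local Open Scope ring_scope.

Definition torsion_free (A : zmodType) : Prop :=
  forall (k : nat) (x : A), (0 < k)%N -> x *+ k = 0 -> x = 0.

Definition is_subgroup (A : zmodType) (X : A -> Prop) : Prop :=
  X 0 /\ forall x y, X x -> X y -> X (x - y).

(* For subgroups X <= Y of A, the quotient Y/X is finite: finitely many
   cosets of X meet Y. *)
Definition finite_quotient (A : zmodType) (Y X : A -> Prop) : Prop :=
  exists s : seq A, forall z, Y z -> exists2 y, y \in s & X (z - y).

Definition img_plus (A : zmodType) (phi : A -> A) (X : A -> Prop) : A -> Prop :=
  fun z => exists x x', [/\ X x, X x' & z = phi x + x'].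

Definition cap_img (A : zmodType) (phi : A -> A) (X : A -> Prop) : A -> Prop :=
  fun z => X z /\ exists x, X x /\ z = phi x.

Definition inertial (A : zmodType) (phi : A -> A) : Prop :=
  forall X : A -> Prop, is_subgroup X -> finite_quotient (img_plus phi X) X.

Definition left_inertial (A : zmodType) (phi : A -> A) : Prop :=
  forall X : A -> Prop, is_subgroup X -> finite_quotient X (cap_img phi X).

Definition mult_by (A : zmodType) (phi : A -> A) (m n : int) : Prop :=
  n != 0 /\ forall x, phi x *~ n = x *~ m.

Definition Zindep (A : zmodType) (s : seq A) : Prop :=
  forall c : seq int, size c = size s ->
    \sum_(i < size s) s`_i *~ c`_i = 0 -> forall i, c`_i = 0.

Definition finite_rank (A : zmodType) : Prop :=
  exists N : nat, forall s : seq A, Zindep s -> (size s <= N)%N.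

From Stdlib Require Import Classical ClassicalEpsilon.
From HB Require Import structures.
From mathcomp Require Import all_boot all_order all_algebra.
From mathcomp Require Import ring.
Import Order.TTheory GRing.Theory Num.Theory.
Local Open Scope ring_scope.
Set Implicit Arguments. Unset Strict Implicit. Unset Printing Implicit Defensive.

(* Pigeonhole on the cosets of a cyclic subgroup <x> shows that an inertial or
   left-inertial endomorphism maps every x to a rational multiple of x; comparing
   the ratios at y and x0 + y, additivity and torsion-freeness force a single ratio
   m/n, taken in lowest terms.  Conversely, if phi = m/n then n(phi(X) + X) <= X
   and mX <= X /\ phi(X), so both properties follow from the finiteness of X/kX,
   which is trivial for k = +-1 and, in finite rank, holds for every k <> 0
   because families independent modulo a prime are Z-independent.  Finally, in
   infinite rank an infinite independent family f spans a free subgroup X, and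
   pigeonhole on the phi(f_i) (resp. the f_i) compares coordinates to give n | m
   (resp. m | n), so coprimality forces |n| = 1 (resp. |m| = 1). *)

Section Subgroups.
Variables (A : zmodType) (X : A -> Prop).
Hypothesis hX : is_subgroup X.

Lemma subgroup0 : X 0.
Proof. exact: hX.1. Qed.

Lemma subgroupB x y : X x -> X y -> X (x - y).
Proof. exact: hX.2. Qed.

Lemma subgroupN x : X x -> X (- x).
Proof. by move=> Xx; rewrite -sub0r; apply: subgroupB => //; apply: subgroup0. Qed.

Lemma subgroupD x y : X x -> X y -> X (x + y).
Proof. by move=> Xx Xy; rewrite -[y]opprK; apply/subgroupB/subgroupN. Qed.

Lemma subgroupMz x c : X x -> X (x *~ c).
Proof.
move=> Xx; have Xxn (k : nat) : X (x *+ k).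
  by elim: k => [|k IHk]; [rewrite mulr0n; apply: subgroup0 | rewrite mulrS; apply: subgroupD].
by case: c => k; rewrite ?NegzE ?mulrNz -pmulrn //; apply: subgroupN.
Qed.

End Subgroups.

Definition cycle_set (A : zmodType) (x : A) : A -> Prop :=
  fun z => exists c : int, z = x *~ c.

Definition zspan (A : zmodType) (f : nat -> A) : A -> Prop :=
  fun z => exists K (c : nat -> int), z = \sum_(i < K) f i *~ c i.

Definition mulrn_set (A : zmodType) (X : A -> Prop) (k : nat) : A -> Prop :=
  fun z => exists2 w, X w & z = w *+ k.

Lemma cycle_set_subgroup (A : zmodType) (x : A) : is_subgroup (cycle_set x).
Proof.
split; first by exists 0; rewrite mulr0z.
by move=> _ _ [a ->] [b ->]; exists (a - b); rewrite mulrzBr.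
Qed.

Lemma sum_mulrz_widen (A : zmodType) (f : nat -> A) (c : nat -> int) (K K' : nat) :
  (K <= K')%N ->
  \sum_(i < K) f i *~ c i = \sum_(i < K') f i *~ (if (i < K)%N then c i else 0).
Proof.
move=> leKK'; rewrite -(subnKC leKK') big_split_ord /=.
rewrite [X in _ + X]big1 ?addr0 => [|i _]; last by rewrite ltnNge leq_addr mulr0z.
by apply: eq_bigr => i _; rewrite ltn_ord.
Qed.

Lemma zspan_subgroup (A : zmodType) (f : nat -> A) : is_subgroup (zspan f).
Proof.
split; first by exists 0%N, (fun _ => 0); rewrite big_ord0.
move=> _ _ [K [c ->]] [K' [c' ->]]; exists (maxn K K').
exists (fun i => (if (i < K)%N then c i else 0) - (if (i < K')%N then c' i else 0)).
rewrite (sum_mulrz_widen f c (leq_maxl K K')) (sum_mulrz_widen f c' (leq_maxr K K')).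
by rewrite -sumrB; apply: eq_bigr => i _; rewrite mulrzBr.
Qed.

Lemma sum_mulrz_delta (A : zmodType) (f : nat -> A) (K j : nat) (e : int) : (j < K)%N ->
  \sum_(i < K) f i *~ (if i == j :> nat then e else 0) = f j *~ e.
Proof.
move=> ltjK; rewrite (bigD1 (Ordinal ltjK)) //= eqxx big1 ?addr0 // => i neij.
by rewrite ifF ?mulr0z //; apply: contraNF neij => /eqP eij; apply/eqP/val_inj.
Qed.

Lemma zspan_mem (A : zmodType) (f : nat -> A) (i : nat) : zspan f (f i).
Proof.
by exists i.+1, (fun l => if l == i then 1 else 0); rewrite sum_mulrz_delta // mulr1z.
Qed.

Lemma mulrn_set_subgroup (A : zmodType) (X : A -> Prop) (k : nat) :
  is_subgroup X -> is_subgroup (mulrn_set X k).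
Proof.
move=> hX; split; first by exists 0; [apply: subgroup0 | rewrite mul0rn].
move=> _ _ [w Xw ->] [w' Xw' ->]; exists (w - w'); first exact: subgroupB.
by rewrite mulrnBl.
Qed.

Lemma cap_img_subgroup (A : zmodType) (phi : {additive A -> A}) (X : A -> Prop) :
  is_subgroup X -> is_subgroup (cap_img phi X).
Proof.
move=> hX; split.
  by split; [apply: subgroup0 | exists 0; rewrite raddf0; split => //; apply: subgroup0].
move=> x y [Xx [u [Xu ex]]] [Xy [v [Xv ey]]]; split; first exact: subgroupB.
by exists (u - v); rewrite ex ey raddfB; split => //; apply: subgroupB.
Qed.

Lemma finite_quotientS (A : zmodType) (Y X X' : A -> Prop) :
  (forall z, X z -> X' z) -> finite_quotient Y X -> finite_quotient Y X'.
Proof. by move=> sXX' [s hs]; exists s => z /hs [y sy /sXX']; exists y. Qed.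

Lemma pigeonhole_seq (T : eqType) (s : seq T) (f : nat -> T) :
  (forall i, f i \in s) -> exists i j, (i < j)%N /\ f i = f j.
Proof.
move=> sf; have lt_index i : (index (f i) s < size s)%N by rewrite index_mem.
pose g (i : 'I_(size s).+1) : 'I_(size s) := Ordinal (lt_index i).
have /injectivePn [i [j neij gij]] : ~~ injectiveb g.
  by apply/injectiveP => /leq_card; rewrite !card_ord ltnn.
have fij : f i = f j.
  rewrite -(nth_index (f i) (sf i)) -(nth_index (f i) (sf j)).
  by congr nth; apply: (congr1 val gij).
case: (ltngtP i j) => [ltij|ltji|/val_inj eqij]; first by exists i, j.
  by exists j, i.
by rewrite eqij eqxx in neij.
Qed.

Lemma finite_quotient_pigeonhole (A : zmodType) (Y X : A -> Prop) (g : nat -> A) :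
  is_subgroup X -> finite_quotient Y X -> (forall i, Y (g i)) ->
  exists i j, (i < j)%N /\ X (g j - g i).
Proof.
move=> hX [s hs] Yg.
have [r rP] : exists r : nat -> A, forall i, r i \in s /\ X (g i - r i).
  by apply: (choice (fun i y => y \in s /\ X (g i - y))) => i; have [y] := hs _ (Yg i); exists y.
have [i [j [ltij rij]]] := pigeonhole_seq (fun i => (rP i).1).
exists i, j; split => //.
have -> : g j - g i = (g j - r j) - (g i - r i) by rewrite rij opprB addrA subrK.
by apply: subgroupB => //; [apply: (rP j).2 | apply: (rP i).2].
Qed.

Section TorsionFree.
Variable A : zmodType.
Hypothesis htf : torsion_free A.

Lemma tf_mulrz_eq0 (x : A) (c : int) : (x *~ c == 0) = (c == 0) || (x == 0).
Proof.
have [->|nzc] := eqVneq c 0; first by rewrite mulr0z eqxx.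
apply/eqP/eqP => [|->]; last by rewrite mul0rz.
case: c nzc => k; rewrite ?NegzE ?mulrNz -pmulrn ?oppr_eq0 => nzk.
  by apply: htf; rewrite lt0n.
by move/eqP; rewrite oppr_eq0 => /eqP; apply: htf.
Qed.

Lemma tf_mulrz_injl (c : int) : c != 0 -> injective (fun x : A => x *~ c).
Proof.
move=> nzc x y /= /eqP; rewrite -subr_eq0 -mulrzBl tf_mulrz_eq0 (negbTE nzc) subr_eq0.
by move/eqP.
Qed.

End TorsionFree.

Lemma inertial_pointwise_ratio (A : zmodType) (phi : {additive A -> A}) :
  inertial phi -> forall x, exists j k : int, k != 0 /\ phi x *~ k = x *~ j.
Proof.
move=> hI x; have Yphix (i : nat) : img_plus phi (cycle_set x) (phi (x *~ i%:Z)).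
  by exists (x *~ i%:Z), 0; split; [exists i%:Z | exists 0; rewrite mulr0z | rewrite addr0].
have [i [j [ltij [c e]]]] :=
  finite_quotient_pigeonhole (cycle_set_subgroup x) (hI _ (cycle_set_subgroup x)) Yphix.
exists c, (j%:Z - i%:Z); split; first by rewrite subr_eq0 eqz_nat gtn_eqF.
by rewrite -e -!raddfMz -raddfB mulrzBr.
Qed.

Lemma left_inertial_cycle (A : zmodType) (phi : {additive A -> A}) :
  left_inertial phi -> forall x, exists2 k : int, k != 0 & exists c : int, x *~ k = phi x *~ c.
Proof.
move=> hL x; have Yx (i : nat) : cycle_set x (x *~ i%:Z) by exists i%:Z.
have [i [j [ltij [_ [w [[c ->] e]]]]]] :=
  finite_quotient_pigeonhole (cap_img_subgroup phi (cycle_set_subgroup x))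
    (hL _ (cycle_set_subgroup x)) Yx.
exists (j%:Z - i%:Z); first by rewrite subr_eq0 eqz_nat gtn_eqF.
by exists c; rewrite mulrzBr e raddfMz.
Qed.

Section LeftInertialTorsionFree.
Variables (A : zmodType) (phi : {additive A -> A}).
Hypotheses (htf : torsion_free A) (hL : left_inertial phi).

Lemma left_inertial_ker0 x : phi x = 0 -> x = 0.
Proof.
move=> phix0; have [k nzk [c xk]] := left_inertial_cycle hL x.
by apply/eqP; move/eqP: xk; rewrite phix0 mul0rz (tf_mulrz_eq0 htf) (negbTE nzk).
Qed.

Lemma left_inertial_pointwise_ratio x : exists j k : int, k != 0 /\ phi x *~ k = x *~ j.
Proof.
have [->|nzx] := eqVneq x 0; first by exists 0, 1; rewrite raddf0 !mul0rz.
have [k nzk [c xk]] := left_inertial_cycle hL x.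
exists k, c; split => //; apply: contraNneq nzx => c0.
by move/eqP: xk; rewrite c0 mulr0z (tf_mulrz_eq0 htf) (negbTE nzk).
Qed.

End LeftInertialTorsionFree.

Definition defect (A : zmodType) (phi : A -> A) (m n : int) (x : A) : A :=
  phi x *~ n - x *~ m.

Lemma defect_is_zmod_morphism (A : zmodType) (phi : {additive A -> A}) (m n : int) :
  zmod_morphism (defect phi m n).
Proof.
rewrite /zmod_morphism /Algebra.zmod_morphism => x y; rewrite /defect raddfB !mulrzBl.
by rewrite !opprB addrACA [RHS]addrACA [- _ + _]addrC.
Qed.

HB.instance Definition _ (A : zmodType) (phi : {additive A -> A}) (m n : int) :=
  GRing.isZmodMorphism.Build A A (defect phi m n) (defect_is_zmod_morphism phi m n).

Section Globalization.
Variable A : zmodType.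
Hypothesis htf : torsion_free A.

Lemma additive_eq0_of_pointwise_ratio (D : {additive A -> A}) (x0 : A) :
  (forall y, exists j k : int, k != 0 /\ D y *~ k = y *~ j) ->
  x0 != 0 -> D x0 = 0 -> forall y, D y = 0.
Proof.
move=> Drat nzx0 Dx0 y.
have [j [k [nzk Dy]]] := Drat y.
have [j' [k' [nzk' Dxy]]] := Drat (x0 + y).
rewrite raddfD Dx0 add0r in Dxy.
have [j'0|nzj'] := eqVneq j' 0.
  by apply: (tf_mulrz_injl htf nzk'); rewrite /= Dxy j'0 mulr0z mul0rz.
have E : y *~ (j * k') = (x0 + y) *~ (j' * k).
  by rewrite !mulrzA -Dy -Dxy -!mulrzA mulrC.
pose c := j * k' - j' * k.
have x0c : x0 *~ (j' * k) = y *~ c by rewrite /c mulrzBr E mulrzDl addrK.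
have nzj'k : j' * k != 0 by rewrite mulf_neq0.
have [c0|nzc] := eqVneq c 0.
  by move/eqP: x0c; rewrite c0 mulr0z (tf_mulrz_eq0 htf) (negbTE nzj'k) (negbTE nzx0).
by apply: (tf_mulrz_injl htf nzc); rewrite /= mul0rz -raddfMz -x0c raddfMz Dx0 mul0rz.
Qed.

Variable phi : {additive A -> A}.
Hypothesis phi_ratio : forall y, exists j k : int, k != 0 /\ phi y *~ k = y *~ j.

Lemma mult_by_of_ratio_at (x0 : A) (m n : int) :
  x0 != 0 -> n != 0 -> phi x0 *~ n = x0 *~ m -> mult_by phi m n.
Proof.
move=> nzx0 nzn phix0; split => // y; apply/eqP; rewrite -subr_eq0; apply/eqP.
apply: (additive_eq0_of_pointwise_ratio (D := defect phi m n) _ nzx0) => [z|].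
- have [j [k [nzk phiz]]] := phi_ratio z; exists (j * n - m * k), k; split => //=.
  by rewrite /defect mulrzBl mulrzBr -!mulrzA (mulrC n k) [phi z *~ _]mulrzA phiz -mulrzA.
- by rewrite -[LHS]/(phi x0 *~ n - x0 *~ m) phix0 subrr.
Qed.

Lemma ratio_lowest_terms (x : A) (j k : int) : k != 0 -> phi x *~ k = x *~ j ->
  exists m n : int, [/\ n != 0, coprimez m n & phi x *~ n = x *~ m].
Proof.
move=> nzk phix; pose q : rat := j%:~R / k%:~R.
have qkj : numq q * k = j * denq q.
  apply/eqP; rewrite -(eqr_int rat) !intrM numqE /q; apply/eqP.
  by field; rewrite intr_eq0.
exists (numq q), (denq q); split; [exact: denq_neq0 | exact: coprime_num_den |].
apply: (tf_mulrz_injl htf nzk).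
by rewrite /= -!mulrzA (mulrC (denq q)) [phi x *~ _]mulrzA phix -mulrzA qkj.
Qed.

(* On the trivial group 1/1 is chosen, so that m = 0 only when phi has a nonzero
   kernel. *)
Lemma exists_mult_by : exists m n : int,
  [/\ mult_by phi m n, coprimez m n & (m = 0 -> exists2 x, x != 0 & phi x = 0)].
Proof.
have [[x0 nzx0]|A0] := classic (exists x0 : A, x0 != 0); last first.
  exists 1, 1; split => //; split => // x.
  have -> : x = 0 by apply: NNPP => nzx; apply: A0; exists x; apply/eqP.
  by rewrite raddf0 !mul0rz.
have [j [k [nzk phix0]]] := phi_ratio x0.
have [m [n [nzn copmn phix0']]] := ratio_lowest_terms nzk phix0.
exists m, n; split => //; first exact: mult_by_of_ratio_at nzx0 nzn phix0'.
move=> m0; exists x0 => //; apply: (tf_mulrz_injl htf nzn).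
by rewrite /= phix0' m0 mulr0z mul0rz.
Qed.

End Globalization.

Definition qspan (A : zmodType) (t : seq A) (a : A) : Prop :=
  exists d (e : nat -> int), d != 0 /\ a *~ d = \sum_(i < size t) t`_i *~ e i.

Lemma rat_row_scale_int (k : nat) (v : 'rV[rat]_k) :
  exists2 P : int, P != 0 & exists w : 'rV[int]_k, map_mx intr w = P%:~R *: v.
Proof.
exists (\prod_(j < k) denq (v 0 j)); first by apply/prodf_neq0 => j _; apply: denq_neq0.
exists (\row_j (numq (v 0 j) * \prod_(l < k | l != j) denq (v 0 l))).
by apply/rowP => j; rewrite !mxE [in RHS](bigD1 j) //= !intrM numqE; ring.
Qed.

Lemma int_mx_kernel (k l : nat) (E : 'M[int]_(k, l)) : (l < k)%N ->
  exists2 w : 'rV[int]_k, w != 0 & w *m E = 0.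
Proof.
move=> ltlk; pose M := map_mx (intr : int -> rat) E.
have /rowV0Pn [v /sub_kermxP vM nzv] : kermx M != 0.
  by rewrite kermx_eq0 -row_leq_rank -ltnNge (leq_ltn_trans (rank_leq_col M)).
have [P nzP [w wv]] := rat_row_scale_int v.
exists w.
  apply: contraNneq nzv => w0; have := wv; rewrite w0 map_mx0 => /esym/eqP.
  by rewrite scalemx_eq0 intr_eq0 (negbTE nzP).
have wEv : map_mx intr (w *m E) = 0 :> 'rV[rat]_l by rewrite map_mxM wv -scalemxAl vM scaler0.
by apply/rowP => i; apply: (@intr_inj rat); move/rowP/(_ i): wEv; rewrite !mxE.
Qed.

Lemma Zindep_size_qspan (A : zmodType) (t u : seq A) :
  (forall a, qspan t a) -> Zindep u -> (size u <= size t)%N.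
Proof.
move=> tspan uind; rewrite leqNgt; apply/negP => lttu.
have [d /choice [e de]] := choice (fun a d => exists e : nat -> int,
  d != 0 /\ a *~ d = \sum_(i < size t) t`_i *~ e i) tspan.
pose E : 'M[int]_(size u, size t) := \matrix_(j, i) e u`_j i.
have [w nzw wE] := int_mx_kernel E lttu.
pose c := [seq d u`_j * w 0 j | j : 'I_(size u) <- enum 'I_(size u)].
have cE (j : 'I_(size u)) : c`_j = d u`_j * w 0 j.
  by rewrite (nth_map j) ?size_enum_ord // nth_ord_enum.
have := uind c; rewrite size_map size_enum_ord => /(_ erefl).
have -> : \sum_(j < size u) u`_j *~ c`_j = 0.
  under eq_bigr => j _ do rewrite cE mulrzA (de u`_j).2 mulrz_suml.
  rewrite exchange_big big1 // => i _.
  under eq_bigr => j _ do rewrite -mulrzA.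
  rewrite -mulrz_sumr.
  have /rowP/(_ i) := wE; rewrite !mxE => wEi.
  by rewrite (eq_bigr (fun j => w 0 j * E j i)) ?wEi ?mulr0z // => j _; rewrite mxE mulrC.
move=> /(_ erefl) c0; apply: (negP nzw); apply/eqP/rowP => j; rewrite mxE.
by move: (c0 j); rewrite cE => /eqP; rewrite mulf_eq0 (negbTE (de u`_j).1) => /eqP.
Qed.

Lemma Zindep_rcons (A : zmodType) (t : seq A) (a : A) :
  Zindep t -> ~ qspan t a -> Zindep (rcons t a).
Proof.
move=> tind nspan c; rewrite size_rcons => sc.
rewrite big_ord_recr /= nth_rcons ltnn eqxx.
under eq_bigr => l _ do rewrite nth_rcons ltn_ord.
move=> csum; have d0 : c`_(size t) = 0.
  apply: NNPP => nzd; apply: nspan; exists (c`_(size t)), (fun l => - c`_l); split.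
    exact/eqP.
  under eq_bigr => l _ do rewrite mulrNz.
  by rewrite sumrN; apply/eqP; rewrite -addr_eq0 addrC csum.
rewrite d0 mulr0z addr0 in csum.
have ct0 := tind (take (size t) c); rewrite size_takel ?sc // in ct0.
move=> l; case: (ltngtP l (size t)) => [ltlt|gtlt|->] //; last by rewrite nth_default ?sc.
rewrite -(nth_take 0 ltlt) ct0 // -[RHS]csum; apply: eq_bigr => k _; rewrite nth_take //.
Qed.

Lemma Zindep_rcons_exists (A : zmodType) (t : seq A) :
  ~ finite_rank A -> Zindep t -> exists a, Zindep (rcons t a).
Proof.
move=> infA tind; apply: NNPP => noext; apply: infA; exists (size t) => u.
apply: Zindep_size_qspan => a; apply: NNPP => nspan.
by apply: noext; exists a; apply: Zindep_rcons.
Qed.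

Lemma infinite_rank_Zindep_seq (A : zmodType) :
  ~ finite_rank A -> exists f : nat -> A, forall K, Zindep (mkseq f K).
Proof.
move=> infA.
have [ext extP] : exists ext : seq A -> A, forall t, Zindep t -> Zindep (rcons t (ext t)).
  apply: (choice (fun t a => Zindep t -> Zindep (rcons t a))) => t.
  have [tind|ndep] := classic (Zindep t); last by exists 0.
  by have [a ind] := Zindep_rcons_exists infA tind; exists a.
pose g := fix g K := if K is K'.+1 then rcons (g K') (ext (g K')) else [::].
have gind K : Zindep (g K).
  elim: K => [|K IHK] /=; last exact: extP.
  by move=> c /size0nil -> _ i; rewrite nth_nil.
have size_g K : size (g K) = K by elim: K => //= K IHK; rewrite size_rcons IHK.
exists (fun i => (g i.+1)`_i) => K; suff -> : mkseq (fun i => (g i.+1)`_i) K = g K by [].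
by elim: K => // K IHK; rewrite mkseqS IHK /= nth_rcons size_g ltnn eqxx.
Qed.

Lemma Zindep_mkseq_coef_inj (A : zmodType) (f : nat -> A) (K : nat) :
  Zindep (mkseq f K) -> forall a b : nat -> int,
  \sum_(i < K) f i *~ a i = \sum_(i < K) f i *~ b i -> forall i, (i < K)%N -> a i = b i.
Proof.
move=> find a b eqab i ltiK; apply/eqP; rewrite -subr_eq0; apply/eqP.
have := find (mkseq (fun l => a l - b l) K); rewrite !size_mkseq => /(_ erefl).
rewrite (eq_bigr (fun l : 'I_K => f l *~ a l - f l *~ b l)) => [|l _].
  by rewrite sumrB eqab subrr => /(_ erefl i); rewrite nth_mkseq.
by rewrite !nth_mkseq // mulrzBr.
Qed.

Lemma zspan_dvdz (A : zmodType) (f : nat -> A) (i j : nat) (w : A) (d e : int) :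
  (forall K, Zindep (mkseq f K)) -> (i < j)%N -> zspan f w ->
  (f j - f i) *~ e = w *~ d -> (d %| e)%Z.
Proof.
move=> find ltij [K [c ->]] fw.
pose K' := maxn K j.+1; have ltjK' : (j < K')%N by rewrite leq_max ltnSn orbT.
pose b (l : nat) := (if l == j then e else 0) - (if l == i then e else 0).
have <- : (if (j < K)%N then c j else 0) * d = e.
  rewrite (Zindep_mkseq_coef_inj (find K') (a := fun l => (if (l < K)%N then c l else 0) * d)
    (b := b) _ ltjK') /b /=; first by rewrite eqxx (gtn_eqF ltij) subr0.
  under eq_bigr => l _ do rewrite mulrzA.
  under [RHS]eq_bigr => l _ do rewrite mulrzBr.
  rewrite -mulrz_suml -sum_mulrz_widen ?leq_maxl // -fw mulrzBl sumrB.
  by rewrite !sum_mulrz_delta // (ltn_trans ltij).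
exact/dvdz_mull/dvdzz.
Qed.

Lemma coprimez_dvdz_norm1 (m n : int) : coprimez m n -> (n %| m)%Z -> `|n| = 1.
Proof. by move=> /eqP copmn /gcdz_idPr; rewrite copmn abszE => <-. Qed.

Lemma inertial_finite_rank (A : zmodType) (phi : {additive A -> A}) (m n : int) :
  mult_by phi m n -> coprimez m n -> inertial phi -> `|n| != 1 -> finite_rank A.
Proof.
move=> [_ phimn] copmn hI n1; apply: NNPP => infA.
have [f find] := infinite_rank_Zindep_seq infA.
have span_f := zspan_subgroup f.
have Yphif i : img_plus phi (zspan f) (phi (f i)).
  by exists (f i), 0; split; [apply: zspan_mem | apply: subgroup0 | rewrite addr0].
have [i [j [ltij Xij]]] := finite_quotient_pigeonhole span_f (hI _ span_f) Yphif.
have : (n %| m)%Z by apply: zspan_dvdz find ltij Xij _; rewrite -raddfB phimn.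
by move/(coprimez_dvdz_norm1 copmn)/eqP; rewrite (negbTE n1).
Qed.

Lemma left_inertial_finite_rank (A : zmodType) (phi : {additive A -> A}) (m n : int) :
  mult_by phi m n -> coprimez m n -> left_inertial phi -> `|m| != 1 -> finite_rank A.
Proof.
move=> [_ phimn] copmn hL m1; apply: NNPP => infA.
have [f find] := infinite_rank_Zindep_seq infA.
have span_f := zspan_subgroup f.
have [i [j [ltij [_ [w [Xw fw]]]]]] :=
  finite_quotient_pigeonhole (cap_img_subgroup phi span_f) (hL _ span_f) (zspan_mem f).
have : (m %| n)%Z by apply: zspan_dvdz find ltij Xw _; rewrite fw phimn.
by rewrite coprimez_sym in copmn; move/(coprimez_dvdz_norm1 copmn)/eqP; rewrite (negbTE m1).
Qed.

Definition mod_indep (A : zmodType) (X : A -> Prop) (p : nat) (z : seq A) : Prop :=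
  forall c : seq int, size c = size z ->
  mulrn_set X p (\sum_(i < size z) z`_i *~ c`_i) -> forall i, (p%:Z %| c`_i)%Z.

Lemma eq0_of_dvdz_expn (p : nat) (c : int) :
  (1 < p)%N -> (forall k, ((p ^ k)%:Z %| c)%Z) -> c = 0.
Proof.
move=> p1 dvdc; apply/eqP; apply: contraT => nzc.
move: (dvdc `|c|%N); rewrite dvdzE absz_nat => /dvdn_leq; rewrite absz_gt0 nzc => /(_ isT).
by rewrite leqNgt ltn_expl.
Qed.

Lemma mod_indep_Zindep (A : zmodType) (X : A -> Prop) (p : nat) (z : seq A) :
  torsion_free A -> is_subgroup X -> prime p -> mod_indep X p z -> Zindep z.
Proof.
move=> htf hX pp zind c sc csum i; apply: (eq0_of_dvdz_expn (prime_gt1 pp)) => k.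
elim: k i => [|k IHk] i; first by rewrite expn0 dvd1z.
pose d := mkseq (fun l => (c`_l %/ (p ^ k)%:Z)%Z) (size z).
have cd l : c`_l = d`_l * (p ^ k)%:Z.
  have [ltlz|lezl] := ltnP l (size z); first by rewrite nth_mkseq // divzK ?IHk.
  by rewrite !nth_default ?size_mkseq ?sc // mul0r.
have nzpk : (p ^ k)%:Z != 0 by rewrite eqz_nat -lt0n expn_gt0 prime_gt0.
have dsum : \sum_(l < size z) z`_l *~ d`_l = 0.
  apply: (tf_mulrz_injl htf nzpk); rewrite /= mul0rz mulrz_suml -[RHS]csum.
  by apply: eq_bigr => l _; rewrite -mulrzA -cd.
have /(_ i) pd : forall l, (p%:Z %| d`_l)%Z.
  apply: zind; first by rewrite size_mkseq.
  by rewrite dsum; exists 0; [apply: subgroup0 | rewrite mul0rn].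
by rewrite cd expnSr PoszM [X in (_ %| X)%Z]mulrC dvdz_mul.
Qed.

Fixpoint residues (A : zmodType) (p : nat) (z : seq A) : seq A :=
  if z is a :: z' then [seq a *+ r + w | r <- iota 0 p, w <- residues p z'] else [:: 0].

Lemma residues_cover (A : zmodType) (X : A -> Prop) (p : nat) (z : seq A) :
  is_subgroup X -> (0 < p)%N -> (forall a, a \in z -> X a) -> forall c : seq int,
  exists2 w, w \in residues p z & mulrn_set X p (\sum_(i < size z) z`_i *~ c`_i - w).
Proof.
move=> hX p0; elim: z => [|a z IHz] zX c /=.
  by exists 0; rewrite ?mem_head // big_ord0 subr0; exists 0; [apply: subgroup0 | rewrite mul0rn].
have [w wres [v Xv ev]] : exists2 w, w \in residues p z &
    mulrn_set X p (\sum_(i < size z) z`_i *~ (behead c)`_i - w).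
  by apply: IHz => b zb; apply: zX; rewrite inE zb orbT.
pose r := (c`_0 %% p%:Z)%Z.
have nzp : p%:Z != 0 by rewrite eqz_nat -lt0n.
have absr : (`|r|%N)%:Z = r by rewrite gez0_abs // modz_ge0.
exists (a *+ `|r|%N + w).
  by apply: allpairs_f => //; rewrite mem_iota add0n -ltz_nat absr ltz_pmod // ltz_nat.
exists (a *~ (c`_0 %/ p%:Z)%Z + v).
  by apply: subgroupD => //; apply: subgroupMz => //; apply: zX; rewrite mem_head.
rewrite big_ord_recl /=.
under eq_bigr => i _ do rewrite /bump leq0n add1n -nth_behead.
rewrite {1}(divz_eq c`_0 p%:Z) -/r mulrzDr mulrzA -pmulrn -absr -pmulrn mulrnDl -ev.
by rewrite opprD addrACA addrK.
Qed.

Lemma mod_indep_cons (A : zmodType) (X : A -> Prop) (p : nat) (y : A) (z : seq A) :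
  is_subgroup X -> prime p -> X y -> (forall a, a \in z -> X a) -> mod_indep X p z ->
  ~ (exists2 w, w \in residues p z & mulrn_set X p (y - w)) -> mod_indep X p (y :: z).
Proof.
move=> hX pp Xy zX zind nrep c sc.
rewrite big_ord_recl /=.
under eq_bigr => i _ do rewrite /bump leq0n add1n -nth_behead.
set S := \sum_(i < size z) z`_i *~ (behead c)`_i => pXsum.
have pX := mulrn_set_subgroup p hX.
have p_c0 : (p%:Z %| c`_0)%Z.
  apply: NNPP => ndvd; apply: nrep.
  have /coprimezP [[u v] /= uv] : coprimez c`_0 p%:Z.
    have : coprime p `|c`_0|.
      by rewrite prime_coprime // -[X in (X %| _)%N](absz_nat p) -dvdzE; apply/negP.
    by rewrite /coprimez /gcdz coprime_sym absz_nat.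
  have [w wres pXw] := residues_cover hX (prime_gt0 pp) zX
    (mkseq (fun i => - u * (behead c)`_i) (size z)).
  exists w => //.
  have Su : \sum_(i < size z) z`_i *~ (mkseq (fun i => - u * (behead c)`_i) (size z))`_i
      = - (S *~ u).
    rewrite /S mulrz_suml -sumrN; apply: eq_bigr => i _.
    by rewrite nth_mkseq // mulNr mulrNz mulrC mulrzA.
  have yuv : y = (y *~ c`_0) *~ u + (y *~ v) *+ p.
    by rewrite -!mulrzA pmulrn -mulrzA -mulrzDr (mulrC c`_0) uv mulr1z.
  have -> : y - w = (y *~ c`_0 + S) *~ u + ((y *~ v) *+ p + (- (S *~ u) - w)).
    by rewrite {1}yuv mulrzDl -!addrA; congr (_ + _); rewrite addrCA addNKr.
  apply: subgroupD => //; first exact: subgroupMz.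
  apply: subgroupD => //; last by rewrite -Su.
  by exists (y *~ v) => //; apply: subgroupMz.
have pXS : mulrn_set X p S.
  have -> : S = (y *~ c`_0 + S) - y *~ c`_0 by rewrite addrC addKr.
  apply: (subgroupB pX pXsum); exists (y *~ (c`_0 %/ p%:Z)%Z); first exact: subgroupMz.
  by rewrite pmulrn -mulrzA divzK.
have := zind (behead c); rewrite size_behead sc /= => /(_ erefl pXS) p_behead.
by case=> [|i]; [exact: p_c0 | rewrite -nth_behead].
Qed.

Lemma residues_cover_or_extend (A : zmodType) (X : A -> Prop) (p : nat) (z : seq A) :
  is_subgroup X -> prime p -> (forall a, a \in z -> X a) -> mod_indep X p z ->
  finite_quotient X (mulrn_set X p) \/ exists2 y, X y & mod_indep X p (y :: z).
Proof.
move=> hX pp zX zind.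
have [cover|] := classic (forall y, X y ->
  exists2 w, w \in residues p z & mulrn_set X p (y - w)); first by left; exists (residues p z).
move=> /not_all_ex_not [y nrep]; have [Xy nrep'] := imply_to_and _ _ nrep.
by right; exists y => //; apply: mod_indep_cons.
Qed.

Lemma prime_quotient_finite (A : zmodType) (X : A -> Prop) (p : nat) :
  torsion_free A -> finite_rank A -> is_subgroup X -> prime p ->
  finite_quotient X (mulrn_set X p).
Proof.
move=> htf [N rankN] hX pp.
suff grow k z : (N - size z <= k)%N -> (forall a, a \in z -> X a) -> mod_indep X p z ->
    finite_quotient X (mulrn_set X p).
  by apply: (grow N [::]); rewrite ?subn0 // => c /size0nil -> _ i; rewrite nth_nil dvdz0.
elim: k z => [|k IHk] z leNk zX zind;
  have [//|[y Xy yzind]] := residues_cover_or_extend hX pp zX zind.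
  move: leNk; rewrite leqn0 subn_eq0 leqNgt => /negP; case.
  exact: rankN (mod_indep_Zindep htf hX pp yzind).
apply: (IHk (y :: z)) yzind; first by rewrite subnS; move: leNk; case: (N - size z)%N.
by move=> a; rewrite inE => /orP [/eqP -> | /zX].
Qed.

Lemma finite_quotient_mulrnM (A : zmodType) (X : A -> Prop) (a b : nat) :
  finite_quotient X (mulrn_set X a) -> finite_quotient X (mulrn_set X b) ->
  finite_quotient X (mulrn_set X (a * b)).
Proof.
move=> [s1 hs1] [s2 hs2]; exists [seq x + y *+ a | x <- s1, y <- s2] => z Xz.
have [x s1x [w Xw ew]] := hs1 z Xz.
have [y s2y [v Xv ev]] := hs2 w Xw.
exists (x + y *+ a); first exact: allpairs_f.
by exists v => //; rewrite mulnC mulrnA -ev mulrnBl -ew opprD addrA.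
Qed.

Lemma mulrn_quotient_finite (A : zmodType) (X : A -> Prop) (K : nat) :
  torsion_free A -> is_subgroup X -> (0 < K)%N -> (K != 1%N -> finite_rank A) ->
  finite_quotient X (mulrn_set X K).
Proof.
move=> htf hX; elim/ltn_ind: K => K IHK K0 rankK.
have [->|K1] := eqVneq K 1%N.
  by exists [:: 0] => z Xz; exists 0; rewrite ?mem_head // subr0; exists z; rewrite ?mulr1n.
have pK : prime (pdiv K) by rewrite pdiv_prime // ltn_neqAle eq_sym K1.
rewrite -(divnK (pdiv_dvd K)); apply: finite_quotient_mulrnM.
  apply: IHK => [||_]; last exact: rankK.
    by rewrite ltn_Pdiv ?prime_gt1.
  by rewrite divn_gt0 ?prime_gt0 // dvdn_leq // pdiv_dvd.
exact: prime_quotient_finite htf (rankK K1) hX pK.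
Qed.

Lemma finite_choice_seq (T : eqType) (s0 : seq T) (R : T -> T -> Prop) :
  exists s : seq T, forall t, t \in s0 -> (exists y, R t y) -> exists2 y, y \in s & R t y.
Proof.
elim: s0 => [|t s0 [s hs]]; first by exists [::].
have [[y Rty]|nRt] := classic (exists y, R t y); last first.
  by exists s => t' /predU1P [-> Rt|/hs //]; case: nRt.
exists (y :: s) => t' /predU1P [-> _|/hs Rt' /Rt' [y' sy' Rty']].
  by exists y; rewrite ?mem_head.
by exists y'; rewrite // inE sy' orbT.
Qed.

Lemma finite_quotient_of_mulrn (A : zmodType) (Y X : A -> Prop) (K : nat) :
  torsion_free A -> is_subgroup X -> (0 < K)%N -> (forall z, Y z -> X (z *+ K)) ->
  finite_quotient X (mulrn_set X K) -> finite_quotient Y X.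
Proof.
move=> htf hX K0 YX [s0 hs0].
have [s hs] := finite_choice_seq s0 (fun t y => Y y /\ mulrn_set X K (y *+ K - t)).
exists s => z Yz; have [t s0t [w Xw ew]] := hs0 _ (YX z Yz).
have [y sy [Yy [w' Xw' ew']]] := hs t s0t (ex_intro _ z (conj Yz (ex_intro2 _ _ w Xw ew))).
exists y => //; suff -> : z - y = w - w' by apply: subgroupB.
have nzK : K%:Z != 0 by rewrite eqz_nat -lt0n.
apply: (tf_mulrz_injl htf nzK); rewrite /= -!pmulrn !mulrnBl -ew -ew'.
by rewrite opprB addrA subrK.
Qed.

Lemma mulrn_absz (A : zmodType) (x : A) (m : int) : x *+ `|m|%N = x *~ (m * sgz m).
Proof. by rewrite pmulrn abszEsg mulrC. Qed.

Lemma mult_by_inertial (A : zmodType) (phi : {additive A -> A}) (m n : int) :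
  torsion_free A -> mult_by phi m n -> (`|n| != 1 -> finite_rank A) -> inertial phi.
Proof.
move=> htf [nzn phimn] rankn X hX; have n0 : (0 < `|n|)%N by rewrite absz_gt0.
apply: (finite_quotient_of_mulrn htf hX n0).
  move=> _ [x [x' [Xx Xx' ->]]]; rewrite mulrn_absz mulrzA mulrzDl phimn.
  by apply: subgroupMz => //; apply: subgroupD => //; apply: subgroupMz.
by apply: mulrn_quotient_finite => // n1; apply: rankn; rewrite -abszE eqz_nat.
Qed.

Lemma mult_by_left_inertial (A : zmodType) (phi : {additive A -> A}) (m n : int) :
  torsion_free A -> mult_by phi m n -> m != 0 -> (`|m| != 1 -> finite_rank A) ->
  left_inertial phi.
Proof.
move=> htf [_ phimn] nzm rankm X hX; have m0 : (0 < `|m|)%N by rewrite absz_gt0.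
apply: finite_quotientS (mulrn_quotient_finite htf hX m0 _) => [_ [w Xw ->]|m1]; last first.
  by apply: rankm; rewrite -abszE eqz_nat.
rewrite mulrn_absz; split; first exact: subgroupMz.
exists (w *~ (n * sgz m)); rewrite raddfMz [phi w *~ _]mulrzA phimn -mulrzA.
by split => //; apply: subgroupMz.
Qed.

Theorem proposition2p2 (A : zmodType) (phi : {additive A -> A})
  (htf : torsion_free A) :
  (inertial phi <->
     exists m n : int, [/\ mult_by phi m n, coprimez m n &
                           (`|n| != 1 -> finite_rank A)])
  /\
  (left_inertial phi <->
     exists m n : int, [/\ mult_by phi m n, coprimez m n, m != 0 &
                           (`|m| != 1 -> finite_rank A)]).
Proof.
split; split.
- move=> hI; have [m [n [phimn copmn _]]] := exists_mult_by htf (inertial_pointwise_ratio hI).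
  by exists m, n; split => //; apply: inertial_finite_rank phimn copmn hI.
- by move=> [m [n [phimn _ rankn]]]; apply: mult_by_inertial htf phimn rankn.
- move=> hL; have [m [n [phimn copmn m0]]] :=
    exists_mult_by htf (left_inertial_pointwise_ratio htf hL).
  exists m, n; split => //; last exact: left_inertial_finite_rank phimn copmn hL.
  by apply/eqP => /m0 [x /negP nzx /(left_inertial_ker0 htf hL)/eqP].
- by move=> [m [n [phimn _ nzm rankm]]]; apply: mult_by_left_inertial htf phimn nzm rankm.
Qed.
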